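(* Let $X$ satisfy (P1) and (P2), let $\alpha$ be a saddle connection on $X$ which is neither a side nor a diagonal, and let $\alpha_{a+1},\dots,\alpha_{a+r}$ be a maximal run of consecutive adjacent segments in its polygonal decomposition which is not contained in a short cylinder. Then for any three consecutive segments $\alpha_i,\alpha_{i+1},\alpha_{i+2}$ of the run, no two of them lie in the same polygon.
   Context: $X$ is a translation surface obtained from finitely many Euclidean polygons by gluing pairs of parallel sides of equal length by translations, with (P1): each polygon convex with all angles obtuse or right; (P2): no two sides of the same polygon are identified. Saddle connection: straight segment between singularities (images of vertices) with none in its interior; a diagonal is a segment inside a polygon joining two non-adjacent vertices. Polygonal decomposition: cut $\alpha$ each time it passes from one polygon to another, giving consecutive oriented segments $\alpha_1,\dots,\alpha_k$, each in one polygon. A segment in polygon $P$ is adjacent if it goes from the relative interior of a side $e$ of $P$ to the relative interior of a side adjacent to $e$; otherwise non-adjacent. The type of a segment going from the interior of side $e$ to the interior of side $e'$ of the same polygon is $e\to e'$. A maximal run of consecutive adjacent segments is contained in a short cylinder if it has at least two segments and, whenever $\alpha_i$ and $\alpha_{i+2}$ both belong to the run, $\alpha_{i+2}$ has the same type as $\alpha_i$. *)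

From Stdlib Require Import Reals Lra Lia List Arith.
Import ListNotations.
Open Scope R_scope.

Definition pt := (R * R)%type.
Definition padd (x y : pt) : pt := (fst x + fst y, snd x + snd y).
Definition psub (x y : pt) : pt := (fst x - fst y, snd x - snd y).
Definition pscale (t : R) (x : pt) : pt := (t * fst x, t * snd x).
Definition cross (x y : pt) : R := fst x * snd y - snd x * fst y.
Definition dot (x y : pt) : R := fst x * fst y + snd x * snd y.

(* Polygon p (p < npoly) has vertices vert p 0, ..., vert p (nsides p - 1),
   listed counterclockwise; side j of polygon p goes from vert p j to
   vert p ((j+1) mod nsides p).  glue p j = (q, l) means side j of polygon p
   is identified with side l of polygon q. *)
Record surface := {
  npoly : nat;
  nsides : nat -> nat;
  vert : nat -> nat -> pt;
  glue : nat -> nat -> nat * nat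
}.

Definition vnext (X : surface) (p j : nat) : pt :=
  vert X p ((j + 1) mod nsides X p)%nat.
Definition vprev (X : surface) (p j : nat) : pt :=
  vert X p ((j + nsides X p - 1) mod nsides X p)%nat.
Definition edge (X : surface) (p j : nat) : pt := psub (vnext X p j) (vert X p j).

Definition sides_adjacent (X : surface) (p j j' : nat) : Prop :=
  j' = ((j + 1) mod nsides X p)%nat \/ j = ((j' + 1) mod nsides X p)%nat.

(* Well-formedness: finitely many polygons (at least 3 vertices each);
   gluing is an involution pairing sides that are parallel, of equal length
   and glued by translation (opposite edge vectors for counterclockwise
   polygons). *)
Definition translation_surface (X : surface) : Prop :=
  (forall p, (p < npoly X)%nat -> (3 <= nsides X p)%nat) /\
  (forall p j, (p < npoly X)%nat -> (j < nsides X p)%nat ->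
     let q := fst (glue X p j) in let l := snd (glue X p j) in
     (q < npoly X)%nat /\ (l < nsides X q)%nat /\
     glue X q l = (p, j) /\ (q, l) <> (p, j) /\
     edge X q l = pscale (-1) (edge X p j)).

Definition convex_ccw (X : surface) (p : nat) : Prop :=
  forall j k, (j < nsides X p)%nat -> (k < nsides X p)%nat ->
    k <> j -> k <> ((j + 1) mod nsides X p)%nat ->
    0 < cross (edge X p j) (psub (vert X p k) (vert X p j)).

Definition angles_right_or_obtuse (X : surface) (p : nat) : Prop :=
  forall j, (j < nsides X p)%nat ->
    dot (psub (vprev X p j) (vert X p j)) (psub (vnext X p j) (vert X p j)) <= 0.

Definition P1 (X : surface) : Prop :=
  forall p, (p < npoly X)%nat -> convex_ccw X p /\ angles_right_or_obtuse X p.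

Definition P2 (X : surface) : Prop :=
  forall p j, (p < npoly X)%nat -> (j < nsides X p)%nat -> fst (glue X p j) <> p.

Definition in_interior (X : surface) (p : nat) (x : pt) : Prop :=
  forall j, (j < nsides X p)%nat -> 0 < cross (edge X p j) (psub x (vert X p j)).

Definition in_side_relint (X : surface) (p j : nat) (x : pt) : Prop :=
  exists t, 0 < t < 1 /\ x = padd (vert X p j) (pscale t (edge X p j)).

Definition is_vertex (X : surface) (p : nat) (x : pt) : Prop :=
  exists j, (j < nsides X p)%nat /\ x = vert X p j.

Record piece := mkPiece { pc_poly : nat; pc_start : pt; pc_end : pt }.
Definition dpiece := mkPiece 0 (0, 0) (0, 0).
Definition seg (s : list piece) (i : nat) : piece := nth i s dpiece.

(* A straight segment on X between singularities which is not a side: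
   consecutive segments alpha_0, ..., alpha_(k-1) (0-based), all with the same
   direction, each with its open part in the interior of its polygon, starting
   and ending at vertices, passing from one polygon to the next through the
   relative interior of a side via the gluing translation. *)
Definition transverse_chain (X : surface) (s : list piece) : Prop :=
  s <> [] /\
  (exists d : pt, d <> (0, 0) /\
     forall i, (i < length s)%nat ->
       exists t, 0 < t /\ pc_end (seg s i) = padd (pc_start (seg s i)) (pscale t d)) /\
  (forall i, (i < length s)%nat ->
     (pc_poly (seg s i) < npoly X)%nat /\
     forall u, 0 < u < 1 ->
       in_interior X (pc_poly (seg s i))
         (padd (pc_start (seg s i))
               (pscale u (psub (pc_end (seg s i)) (pc_start (seg s i)))))) /\
  is_vertex X (pc_poly (seg s 0)) (pc_start (seg s 0)) /\
  is_vertex X (pc_poly (seg s (length s - 1))) (pc_end (seg s (length s - 1))) /\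
  (forall i, (i + 1 < length s)%nat ->
     exists j, (j < nsides X (pc_poly (seg s i)))%nat /\
       in_side_relint X (pc_poly (seg s i)) j (pc_end (seg s i)) /\
       let q := fst (glue X (pc_poly (seg s i)) j) in
       let l := snd (glue X (pc_poly (seg s i)) j) in
       pc_poly (seg s (i + 1)) = q /\
       pc_start (seg s (i + 1)) =
         padd (pc_end (seg s i)) (psub (vnext X q l) (vert X (pc_poly (seg s i)) j))).

Definition is_side (X : surface) (s : list piece) : Prop :=
  exists p j, (p < npoly X)%nat /\ (j < nsides X p)%nat /\
    (s = [mkPiece p (vert X p j) (vnext X p j)] \/
     s = [mkPiece p (vnext X p j) (vert X p j)]).

Definition is_diagonal (X : surface) (s : list piece) : Prop :=
  exists p j k, (p < npoly X)%nat /\ (j < nsides X p)%nat /\ (k < nsides X p)%nat /\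
    j <> k /\ k <> ((j + 1) mod nsides X p)%nat /\ j <> ((k + 1) mod nsides X p)%nat /\
    s = [mkPiece p (vert X p j) (vert X p k)].

(* Saddle connection (every vertex image counts as a singularity): either a
   side, or a straight segment leaving a vertex into the interior of a polygon
   (a diagonal if it stays in one polygon). *)
Definition saddle_connection (X : surface) (s : list piece) : Prop :=
  is_side X s \/ transverse_chain X s.

Definition seg_type (X : surface) (s : list piece) (i p j j' : nat) : Prop :=
  (i < length s)%nat /\ pc_poly (seg s i) = p /\
  (j < nsides X p)%nat /\ (j' < nsides X p)%nat /\
  in_side_relint X p j (pc_start (seg s i)) /\
  in_side_relint X p j' (pc_end (seg s i)).

Definition adjacent_seg (X : surface) (s : list piece) (i : nat) : Prop :=
  exists p j j', seg_type X s i p j j' /\ sides_adjacent X p j j'.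

Definition same_type (X : surface) (s : list piece) (i i' : nat) : Prop :=
  exists p j j', seg_type X s i p j j' /\ seg_type X s i' p j j'.

(* alpha_a, ..., alpha_(a+r-1) (0-based) is a maximal run of consecutive
   adjacent segments. *)
Definition maximal_run (X : surface) (s : list piece) (a r : nat) : Prop :=
  (1 <= r)%nat /\ (a + r <= length s)%nat /\
  (forall i, (a <= i < a + r)%nat -> adjacent_seg X s i) /\
  (a = 0%nat \/ ~ adjacent_seg X s (a - 1)) /\
  ((a + r)%nat = length s \/ ~ adjacent_seg X s (a + r)).

Definition in_short_cylinder (X : surface) (s : list piece) (a r : nat) : Prop :=
  (2 <= r)%nat /\
  forall i, (a <= i)%nat -> (i + 2 < a + r)%nat -> same_type X s i (i + 2).

(* Consecutive segments lie in different polygons since (P2) forbids gluing a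
   polygon to itself.  Suppose alpha_i and alpha_(i+2) lie in the same polygon P.
   As all angles are right or obtuse, consecutive edges of a polygon turn left by
   at most pi/2, so a direction entering a polygon through one side and leaving
   through an adjacent one lies in a sector of opening at most pi/2 determined by
   that corner.  Comparing the three corners cut by alpha_i, alpha_(i+1),
   alpha_(i+2) shows that alpha_(i+2) cuts the same corner of P as alpha_i, i.e.
   has the same type.  Equal types at i and i+2 mean equal exit (and entry)
   sides, so the gluings send alpha_(i+3) (and alpha_(i-1)) into the polygon of
   alpha_(i+1); hence the coincidence spreads along the whole run, which is then
   contained in a short cylinder. *)

From Stdlib Require Import Reals List Arith.
From Stdlib Require Import Lra Lia Psatz.

Lemma succ_mod_cases (n j : nat) : (j < n ->
  (j + 1 < n /\ (j + 1) mod n = j + 1) \/ (j + 1 = n /\ (j + 1) mod n = 0))%nat.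
Proof.
  intros Hj. destruct (Nat.eq_dec (j + 1) n) as [E|E].
  - right; split; [exact E|]. rewrite E. apply Nat.Div0.mod_same.
  - left; split; [lia|]. apply Nat.mod_small; lia.
Qed.

Ltac succ_mod_cases n j :=
  let H := fresh in let E := fresh in
  assert (H : (j < n)%nat) by lia;
  destruct (succ_mod_cases n j H) as [[? E]|[? E]]; rewrite E in *; clear E H.

Lemma succ_mod_lt (n j : nat) : (j < n -> (j + 1) mod n < n)%nat.
Proof. intros; succ_mod_cases n j; lia. Qed.

Lemma succ_mod_neq (n j : nat) : (2 <= n -> j < n -> (j + 1) mod n <> j)%nat.
Proof. intros; succ_mod_cases n j; lia. Qed.

Lemma succ_succ_mod_neq (n j : nat) : (3 <= n -> j < n -> ((j + 1) mod n + 1) mod n <> j)%nat.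
Proof.
  intros; succ_mod_cases n j; [succ_mod_cases n (j + 1)%nat | succ_mod_cases n 0%nat]; lia.
Qed.

Lemma succ_mod_inj (n j k : nat) : (j < n -> k < n -> (j + 1) mod n = (k + 1) mod n -> j = k)%nat.
Proof. intros; succ_mod_cases n j; succ_mod_cases n k; lia. Qed.

Lemma pred_succ_mod (n j : nat) : (j < n -> ((j + 1) mod n + n - 1) mod n = j)%nat.
Proof.
  intros Hj; succ_mod_cases n j.
  - replace (j + 1 + n - 1)%nat with (j + 1 * n)%nat by lia.
    rewrite Nat.Div0.mod_add. apply Nat.mod_small; lia.
  - replace (0 + n - 1)%nat with j by lia. apply Nat.mod_small; lia.
Qed.

Lemma interval_spread (Q : nat -> Prop) (lo hi i : nat) : (lo <= i <= hi)%nat -> Q i ->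
  (forall k, (lo <= k < hi)%nat -> Q k -> Q (k + 1)%nat) ->
  (forall k, (lo < k <= hi)%nat -> Q k -> Q (k - 1)%nat) ->
  forall k, (lo <= k <= hi)%nat -> Q k.
Proof.
  intros Hi Qi Hup Hdown k Hk.
  assert (Hright : forall m, (i + m <= hi)%nat -> Q (i + m)%nat).
  { induction m as [|m IH]; intros Hm; [now rewrite Nat.add_0_r|].
    replace (i + S m)%nat with (i + m + 1)%nat by lia. apply Hup; [lia|]. apply IH; lia. }
  assert (Hleft : forall m, (lo + m <= i)%nat -> Q (i - m)%nat).
  { induction m as [|m IH]; intros Hm; [now rewrite Nat.sub_0_r|].
    replace (i - S m)%nat with (i - m - 1)%nat by lia. apply Hdown; [lia|]. apply IH; lia. }
  destruct (Nat.le_ge_cases i k).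
  - replace k with (i + (k - i))%nat by lia. apply Hright; lia.
  - replace k with (i - (i - k))%nat by lia. apply Hleft; lia.
Qed.

Open Scope R_scope.

Lemma cross_antisym (x y : pt) : cross x y = - cross y x.
Proof. destruct x, y; unfold cross; simpl; ring. Qed.

Lemma dot_comm (x y : pt) : dot x y = dot y x.
Proof. destruct x, y; unfold dot; simpl; ring. Qed.

Lemma cross_opp_r (x y : pt) : cross x (pscale (-1) y) = - cross x y.
Proof. destruct x, y; unfold cross, pscale; simpl; ring. Qed.

Lemma cross_mul_norm2 (u z1 z2 : pt) :
  cross z1 z2 * dot u u = dot u z1 * cross u z2 - cross u z1 * dot u z2.
Proof. destruct u, z1, z2; unfold cross, dot; simpl; ring. Qed.

Lemma norm2_pos_of_cross (u w : pt) : cross u w <> 0 -> 0 < dot u u /\ 0 < dot w w.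
Proof.
  destruct u as [a b], w as [c e]; unfold cross, dot; simpl; intros H.
  split; destruct (Req_dec a 0), (Req_dec b 0), (Req_dec c 0), (Req_dec e 0);
    subst; try nra; exfalso; apply H; ring.
Qed.

(* [w] is obtained from [u] by a left turn of angle in (0, pi/2]. *)
Definition quarter_turn (u w : pt) : Prop := 0 < cross u w /\ 0 <= dot u w.

Lemma quarter_turn_opp (u w : pt) :
  quarter_turn (pscale (-1) u) (pscale (-1) w) <-> quarter_turn u w.
Proof.
  unfold quarter_turn; destruct u as [u1 u2], w as [w1 w2]; unfold cross, dot, pscale; simpl.
  replace (-1 * u1 * (-1 * w2) - -1 * u2 * (-1 * w1)) with (u1 * w2 - u2 * w1) by ring.
  replace (-1 * u1 * (-1 * w1) + -1 * u2 * (-1 * w2)) with (u1 * w1 + u2 * w2) by ring.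
  tauto.
Qed.

Lemma quarter_turn_dot_pos (u w d : pt) : quarter_turn u w ->
  0 < cross u d -> cross w d < 0 -> 0 < dot u d /\ 0 < dot w d.
Proof.
  intros [Huw Duw] Hud Hwd.
  destruct (norm2_pos_of_cross u w ltac:(lra)) as [Nu Nw].
  pose proof (cross_mul_norm2 u w d) as Iu.
  pose proof (cross_mul_norm2 w u d) as Iw.
  rewrite (cross_antisym w u), (dot_comm w u) in Iw.
  split; nra.
Qed.

Lemma quarter_turn_dot_neg (u w d : pt) : quarter_turn u w ->
  cross u d < 0 -> 0 < cross w d -> dot u d < 0 /\ dot w d < 0.
Proof.
  intros Huw Hud Hwd.
  destruct (quarter_turn_dot_pos u w (pscale (-1) d) Huw) as [Pu Pw];
    rewrite ?cross_opp_r; try lra.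
  destruct u, w, d; unfold dot, pscale in *; simpl in *; lra.
Qed.

Lemma cross_pos_of_wedges (p q y d : pt) :
  0 < cross p q -> 0 < cross p y -> 0 < cross q y ->
  cross p d < 0 -> 0 < cross q d -> 0 < cross y d.
Proof.
  destruct p as [p1 p2], q as [q1 q2], y as [y1 y2], d as [d1 d2]; unfold cross; simpl.
  intros.
  assert (E : (y1 * d2 - y2 * d1) * (p1 * q2 - p2 * q1) =
              (y1 * q2 - y2 * q1) * (p1 * d2 - p2 * d1) + (p1 * y2 - p2 * y1) * (q1 * d2 - q2 * d1))
    by ring.
  nra.
Qed.

Section ConvexPolygon.

Variables (X : surface) (p : nat).
Hypothesis Hsides : (3 <= nsides X p)%nat.
Hypothesis Hconv : convex_ccw X p.

Local Notation n := (nsides X p).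
Local Notation nxt j := (((j + 1) mod nsides X p)%nat).

Lemma cross_edge_succ_pos (m : nat) : (m < n)%nat -> 0 < cross (edge X p m) (edge X p (nxt m)).
Proof.
  intros Hm.
  assert (Hm1 : (nxt m < n)%nat) by (apply succ_mod_lt; exact Hm).
  pose proof (Hconv m (nxt (nxt m)) Hm (succ_mod_lt _ _ Hm1)
                (succ_succ_mod_neq _ _ Hsides Hm) (succ_mod_neq n _ ltac:(lia) Hm1)) as C.
  unfold edge, vnext in *.
  destruct (vert X p m), (vert X p (nxt m)), (vert X p (nxt (nxt m))).
  unfold cross, psub in *; simpl in *; nra.
Qed.

Lemma edge_quarter_turn (m : nat) : angles_right_or_obtuse X p -> (m < n)%nat ->
  quarter_turn (edge X p m) (edge X p (nxt m)).
Proof.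
  intros Hang Hm. split; [now apply cross_edge_succ_pos|].
  assert (Hm1 : (nxt m < n)%nat) by (apply succ_mod_lt; exact Hm).
  pose proof (Hang _ Hm1) as O.
  unfold vprev in O. rewrite pred_succ_mod in O by exact Hm.
  unfold edge, vnext in *.
  destruct (vert X p m), (vert X p (nxt m)), (vert X p (nxt (nxt m))).
  unfold dot, psub in *; simpl in *; nra.
Qed.

Lemma relint_cross_edge_pos (j k : nat) (x : pt) :
  (j < n)%nat -> (k < n)%nat -> k <> j -> in_side_relint X p k x ->
  0 < cross (edge X p j) (psub x (vert X p j)).
Proof.
  intros Hj Hk Hkj [s [Hs ->]].
  assert (Hcomb : cross (edge X p j) (psub (padd (vert X p k) (pscale s (edge X p k))) (vert X p j)) =
    (1 - s) * cross (edge X p j) (psub (vert X p k) (vert X p j)) +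
    s * cross (edge X p j) (psub (vert X p (nxt k)) (vert X p j))).
  { unfold edge at 2, vnext.
    destruct (edge X p j), (vert X p k), (vert X p (nxt k)), (vert X p j).
    unfold cross, psub, padd, pscale; simpl; ring. }
  assert (Hnonneg : forall i, (i < n)%nat -> 0 <= cross (edge X p j) (psub (vert X p i) (vert X p j))).
  { intros i Hi.
    destruct (Nat.eq_dec i j) as [->|Eij].
    { destruct (edge X p j), (vert X p j); unfold cross, psub; simpl; lra. }
    destruct (Nat.eq_dec i (nxt j)) as [->|Eij'].
    { unfold edge, vnext. destruct (vert X p j), (vert X p (nxt j)).
      unfold cross, psub; simpl; lra. }
    now apply Rlt_le, Hconv. }
  assert (Hk1 : (nxt k < n)%nat) by (apply succ_mod_lt; exact Hk).
  rewrite Hcomb.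
  destruct (Nat.eq_dec k (nxt j)) as [Ek|Ek].
  - assert (0 < cross (edge X p j) (psub (vert X p (nxt k)) (vert X p j))).
    { apply Hconv; auto.
      - subst k. now apply succ_succ_mod_neq.
      - intro E. apply Hkj. now apply (succ_mod_inj n). }
    pose proof (Hnonneg k Hk). nra.
  - pose proof (Hconv j k Hj Hk Hkj Ek). pose proof (Hnonneg _ Hk1). nra.
Qed.

Lemma side_relint_unique (j k : nat) (x : pt) : (j < n)%nat -> (k < n)%nat ->
  in_side_relint X p j x -> in_side_relint X p k x -> j = k.
Proof.
  intros Hj Hk Rj Rk.
  destruct (Nat.eq_dec k j) as [->|Ekj]; [reflexivity|exfalso].
  pose proof (relint_cross_edge_pos j k x Hj Hk Ekj Rk) as Pos.
  destruct Rj as [t [_ ->]].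
  destruct (edge X p j), (vert X p j); unfold cross, psub, padd, pscale in Pos; simpl in Pos; nra.
Qed.

Lemma turning_vertex_cross_min (b k : nat) (d : pt) : (b < n)%nat ->
  cross (edge X p b) d < 0 -> 0 < cross (edge X p (nxt b)) d ->
  (k < n)%nat -> k <> nxt b -> cross (vert X p (nxt b)) d < cross (vert X p k) d.
Proof.
  intros Hb Db Dm Hk Hkm.
  assert (Hm : (nxt b < n)%nat) by (apply succ_mod_lt; exact Hb).
  pose proof (cross_edge_succ_pos b Hb) as Cbm.
  destruct (Nat.eq_dec k (nxt (nxt b))) as [->|E1].
  { unfold edge, vnext in Dm. destruct (vert X p (nxt b)), (vert X p (nxt (nxt b))), d.
    unfold cross, psub in *; simpl in *; lra. }
  destruct (Nat.eq_dec k b) as [->|E2].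
  { unfold edge, vnext in Db. destruct (vert X p (nxt b)), (vert X p b), d.
    unfold cross, psub in *; simpl in *; lra. }
  pose proof (Hconv b k Hb Hk E2 Hkm) as C1.
  pose proof (Hconv _ k Hm Hk Hkm E1) as C2.
  pose proof (cross_pos_of_wedges (edge X p b) (edge X p (nxt b))
                (psub (vert X p k) (vert X p (nxt b))) d Cbm) as W.
  unfold edge, vnext in *.
  destruct (vert X p b) as [b1 b2], (vert X p (nxt b)) as [m1 m2], (vert X p k) as [k1 k2],
    (vert X p (nxt (nxt b))) as [l1 l2], d as [d1 d2].
  unfold cross, psub in *; simpl in *.
  assert (0 < (k1 - m1) * d2 - (k2 - m2) * d1) by (apply W; nra). nra.
Qed.

Lemma turning_vertex_unique (b c : nat) (d : pt) : (b < n)%nat -> (c < n)%nat ->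
  cross (edge X p b) d < 0 -> 0 < cross (edge X p (nxt b)) d ->
  cross (edge X p c) d < 0 -> 0 < cross (edge X p (nxt c)) d -> b = c.
Proof.
  intros Hb Hc Db Db' Dc Dc'.
  destruct (Nat.eq_dec (nxt b) (nxt c)) as [E|E]; [now apply (succ_mod_inj n)|exfalso].
  pose proof (turning_vertex_cross_min b (nxt c) d Hb Db Db' (succ_mod_lt _ _ Hc) (not_eq_sym E)).
  pose proof (turning_vertex_cross_min c (nxt b) d Hc Dc Dc' (succ_mod_lt _ _ Hb) E).
  lra.
Qed.

End ConvexPolygon.

Lemma pscale_opp_sym (x y : pt) : x = pscale (-1) y -> y = pscale (-1) x.
Proof. intros ->; destruct y; unfold pscale; simpl; f_equal; ring. Qed.

(* Away from the conclusion, two of the three corners cut by the segments are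
   quarter turns forcing opposite signs on some [dot _ d]; in the remaining
   configuration both segments in [P] cut the corner at the unique vertex
   extremal for [d]. *)
Lemma adjacent_return_same_sides (X : surface) (P Q a b e e' g g' : nat) (d : pt) :
  translation_surface X -> P1 X -> (P < npoly X)%nat -> (Q < npoly X)%nat ->
  (a < nsides X P)%nat -> (b < nsides X P)%nat -> (g < nsides X P)%nat -> (g' < nsides X P)%nat ->
  (e < nsides X Q)%nat -> (e' < nsides X Q)%nat ->
  sides_adjacent X P a b -> sides_adjacent X Q e e' -> sides_adjacent X P g g' ->
  edge X Q e = pscale (-1) (edge X P b) -> edge X P g = pscale (-1) (edge X Q e') ->
  0 < cross (edge X P a) d -> cross (edge X P b) d < 0 ->
  0 < cross (edge X P g) d -> cross (edge X P g') d < 0 ->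
  a = g /\ b = g'.
Proof.
  intros HX HP1 HP HQ Ha Hb Hg Hg' He He' Aab Aee Agg Eb Eg Da Db Dg Dg'.
  apply pscale_opp_sym in Eg.
  assert (Hturn : forall R m, (R < npoly X)%nat -> (m < nsides X R)%nat ->
            quarter_turn (edge X R m) (edge X R ((m + 1) mod nsides X R))).
  { intros R m HR Hm.
    exact (edge_quarter_turn X R (proj1 HX R HR) (proj1 (HP1 R HR)) m (proj2 (HP1 R HR)) Hm). }
  assert (HsP : (3 <= nsides X P)%nat) by (apply HX; exact HP).
  assert (HcP : convex_ccw X P) by (apply HP1; exact HP).
  destruct Aee as [Ee|Ee].
  - assert (BG : quarter_turn (edge X P b) (edge X P g)).
    { rewrite <- quarter_turn_opp, <- Eb, <- Eg, Ee. now apply Hturn. }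
    destruct (quarter_turn_dot_neg _ _ d BG Db Dg) as [Nb Ng].
    destruct Aab as [Eab|Eab].
    { exfalso. subst b. pose proof (quarter_turn_dot_pos _ _ d (Hturn P a HP Ha) Da Db). lra. }
    destruct Agg as [Egg|Egg].
    { exfalso. subst g'. pose proof (quarter_turn_dot_pos _ _ d (Hturn P g HP Hg) Dg Dg'). lra. }
    subst a g.
    assert (b = g') by (apply (turning_vertex_unique X P HsP HcP b g' d); auto).
    subst g'. auto.
  - assert (GB : quarter_turn (edge X P g) (edge X P b)).
    { rewrite <- quarter_turn_opp, <- Eb, <- Eg, Ee. now apply Hturn. }
    destruct (quarter_turn_dot_pos _ _ d GB Dg Db) as [Pg Pb].
    destruct Aab as [Eab|Eab]; cycle 1.
    { exfalso. subst a. pose proof (quarter_turn_dot_neg _ _ d (Hturn P b HP Hb) Db Da). lra. }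
    destruct Agg as [Egg|Egg]; cycle 1.
    { exfalso. subst g. pose proof (quarter_turn_dot_neg _ _ d (Hturn P g' HP Hg') Dg' Dg). lra. }
    subst b g'.
    assert (a = g) by (apply (turning_vertex_unique X P HsP HcP a g (pscale (-1) d));
                       auto; rewrite cross_opp_r; lra).
    subst g. auto.
Qed.

Section TransverseChain.

Variables (X : surface) (s : list piece).
Hypothesis HX : translation_surface X.
Hypothesis HP1 : P1 X.
Hypothesis Hs : transverse_chain X s.

Local Notation poly k := (pc_poly (seg s k)).

Lemma chain_poly_lt (k : nat) : (k < length s)%nat -> (poly k < npoly X)%nat.
Proof. intros Hk. destruct Hs as [_ [_ [Hint _]]]. exact (proj1 (Hint k Hk)). Qed.

Lemma chain_crossing (k : nat) : (k + 1 < length s)%nat ->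
  exists j l, (j < nsides X (poly k))%nat /\ (l < nsides X (poly (k + 1)))%nat /\
    in_side_relint X (poly k) j (pc_end (seg s k)) /\
    in_side_relint X (poly (k + 1)) l (pc_start (seg s (k + 1))) /\
    glue X (poly k) j = (poly (k + 1), l) /\
    glue X (poly (k + 1)) l = (poly k, j) /\
    edge X (poly (k + 1)) l = pscale (-1) (edge X (poly k) j).
Proof.
  intros Hk. destruct Hs as [_ [_ [_ [_ [_ Hcross]]]]].
  destruct (Hcross k Hk) as [j [Hj [Rj [Hq Hstart]]]].
  destruct (proj2 HX _ _ (chain_poly_lt k ltac:(lia)) Hj) as [_ [Hl [Hback [_ Hedge]]]].
  destruct (glue X (poly k) j) as [q l] eqn:G; simpl in *.
  exists j, l. rewrite Hq. repeat split; auto.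
  destruct Rj as [t [Ht Hend]]. exists (1 - t). split; [lra|].
  rewrite Hstart, Hend. change (edge X q l) with (psub (vnext X q l) (vert X q l)) in Hedge |- *.
  destruct (vnext X q l), (vert X q l), (edge X (poly k) j), (vert X (poly k) j).
  unfold psub, padd, pscale in *; simpl in *. injection Hedge as E1 E2.
  f_equal; nra.
Qed.

Lemma chain_poly_succ_neq (k : nat) : P2 X -> (k + 1 < length s)%nat -> poly k <> poly (k + 1).
Proof.
  intros HP2 Hk.
  destruct (chain_crossing k Hk) as [j [l [Hj [_ [_ [_ [G _]]]]]]].
  pose proof (HP2 _ _ (chain_poly_lt k ltac:(lia)) Hj) as N.
  rewrite G in N. simpl in N. auto.
Qed.

Lemma chain_direction : exists d : pt, forall k p a b, seg_type X s k p a b ->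
  0 < cross (edge X p a) d /\ cross (edge X p b) d < 0.
Proof.
  destruct Hs as [_ [[d [_ Hdir]] [Hint _]]].
  exists d. intros k p a b [Hk [Hp [Ha [Hb [Ra Rb]]]]].
  destruct (Hdir k Hk) as [t [Ht Hend]].
  pose proof (proj2 (Hint k Hk) (1 / 2) ltac:(lra)) as Hmid. rewrite Hp in Hmid.
  pose proof (Hmid a Ha) as Ia. pose proof (Hmid b Hb) as Ib. clear Hmid.
  destruct Ra as [sa [_ Ea]], Rb as [sb [_ Eb]].
  rewrite Hend in Ib, Eb. rewrite Hend in Ia.
  destruct (pc_start (seg s k)) as [x1 x2].
  destruct (edge X p a) as [a1 a2], (edge X p b) as [b1 b2], (vert X p a) as [va1 va2],
    (vert X p b) as [vb1 vb2], d as [d1 d2].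
  unfold cross, psub, padd, pscale in *; simpl in *.
  injection Ea as -> ->. injection Eb as Eb1 Eb2.
  split; nra.
Qed.

Lemma surface_side_relint_unique (p j k : nat) (x : pt) : (p < npoly X)%nat ->
  (j < nsides X p)%nat -> (k < nsides X p)%nat ->
  in_side_relint X p j x -> in_side_relint X p k x -> j = k.
Proof. intros Hp. apply side_relint_unique; [apply HX | apply HP1]; exact Hp. Qed.

Lemma same_type_succ_poly (k : nat) : (k + 3 < length s)%nat ->
  same_type X s k (k + 2) -> poly (k + 1) = poly (k + 3).
Proof.
  intros Hk [p [x [y [[_ [E0 [_ [Hy [_ Ry]]]]] [_ [E2 [_ [_ [_ Ry2]]]]]]]]].
  destruct (chain_crossing k ltac:(lia)) as [j [l [Hj [_ [Rj [_ [G _]]]]]]].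
  destruct (chain_crossing (k + 2) ltac:(lia)) as [j2 [l2 [Hj2 [_ [Rj2 [_ [G2 _]]]]]]].
  replace (k + 2 + 1)%nat with (k + 3)%nat in G2 by lia.
  rewrite E0 in Hj, Rj, G. rewrite E2 in Hj2, Rj2, G2.
  assert (Hp : (p < npoly X)%nat) by (rewrite <- E0; apply chain_poly_lt; lia).
  pose proof (surface_side_relint_unique p j y _ Hp Hj Hy Rj Ry).
  pose proof (surface_side_relint_unique p j2 y _ Hp Hj2 Hy Rj2 Ry2).
  subst j j2. rewrite G in G2. congruence.
Qed.

Lemma same_type_pred_poly (k : nat) : (1 <= k)%nat -> (k + 2 < length s)%nat ->
  same_type X s k (k + 2) -> poly (k - 1) = poly (k + 1).
Proof.
  intros Hk1 Hk [p [x [y [[_ [E0 [Hx [_ [Rx _]]]]] [_ [E2 [_ [_ [Rx2 _]]]]]]]]].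
  destruct (chain_crossing (k - 1) ltac:(lia)) as [j [l [_ [Hl [_ [Rl [_ [G _]]]]]]]].
  destruct (chain_crossing (k + 1) ltac:(lia)) as [j2 [l2 [_ [Hl2 [_ [Rl2 [_ [G2 _]]]]]]]].
  replace (k - 1 + 1)%nat with k in Hl, Rl, G by lia.
  replace (k + 1 + 1)%nat with (k + 2)%nat in Hl2, Rl2, G2 by lia.
  rewrite E0 in Hl, Rl, G. rewrite E2 in Hl2, Rl2, G2.
  assert (Hp : (p < npoly X)%nat) by (rewrite <- E0; apply chain_poly_lt; lia).
  pose proof (surface_side_relint_unique p l x _ Hp Hl Hx Rl Rx).
  pose proof (surface_side_relint_unique p l2 x _ Hp Hl2 Hx Rl2 Rx2).
  subst l l2. rewrite G in G2. congruence.
Qed.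

Lemma same_poly_same_type (k : nat) : (k + 2 < length s)%nat ->
  adjacent_seg X s k -> adjacent_seg X s (k + 1) -> adjacent_seg X s (k + 2) ->
  poly k = poly (k + 2) -> same_type X s k (k + 2).
Proof.
  intros Hk [P [a [b [Tk Aab]]]] [Q [e [e' [Tk1 Aee]]]] [P' [g [g' [Tk2 Agg]]]] Heq.
  destruct chain_direction as [d Hdir].
  destruct (Hdir _ _ _ _ Tk) as [Da Db]. destruct (Hdir _ _ _ _ Tk2) as [Dg Dg'].
  destruct (chain_crossing k ltac:(lia)) as [j [l [Hj [Hl [Rj [Rl [_ [_ E1]]]]]]]].
  destruct (chain_crossing (k + 1) ltac:(lia)) as [j2 [l2 [Hj2 [Hl2 [Rj2 [Rl2 [_ [_ E2]]]]]]]].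
  replace (k + 1 + 1)%nat with (k + 2)%nat in * by lia.
  pose proof Tk as [_ [PE [Ha [Hb [_ Rb]]]]].
  destruct Tk1 as [_ [QE [He [He' [Re Re']]]]].
  pose proof Tk2 as [_ [PE' [Hg [Hg' [Rg _]]]]].
  assert (EP : P' = P) by congruence. rewrite EP in *.
  rewrite PE in Hj, Rj, E1. rewrite QE in Hl, Rl, E1, Hj2, Rj2, E2. rewrite PE' in Hl2, Rl2, E2.
  assert (HP : (P < npoly X)%nat) by (rewrite <- PE; apply chain_poly_lt; lia).
  assert (HQ : (Q < npoly X)%nat) by (rewrite <- QE; apply chain_poly_lt; lia).
  pose proof (surface_side_relint_unique P j b _ HP Hj Hb Rj Rb).
  pose proof (surface_side_relint_unique Q l e _ HQ Hl He Rl Re).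
  pose proof (surface_side_relint_unique Q j2 e' _ HQ Hj2 He' Rj2 Re').
  pose proof (surface_side_relint_unique P l2 g _ HP Hl2 Hg Rl2 Rg).
  subst j l j2 l2.
  destruct (adjacent_return_same_sides X P Q a b e e' g g' d HX HP1 HP HQ
              Ha Hb Hg Hg' He He' Aab Aee Agg E1 E2 Da Db Dg Dg') as [-> ->].
  exists P, g, g'. split; assumption.
Qed.

End TransverseChain.

Theorem mainTheorem10 :
  forall (X : surface) (s : list piece) (a r : nat),
    translation_surface X -> P1 X -> P2 X ->
    saddle_connection X s -> ~ is_side X s -> ~ is_diagonal X s ->
    maximal_run X s a r -> ~ in_short_cylinder X s a r ->
    forall i, (a <= i)%nat -> (i + 2 < a + r)%nat ->
      pc_poly (seg s i) <> pc_poly (seg s (i + 1)) /\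
      pc_poly (seg s (i + 1)) <> pc_poly (seg s (i + 2)) /\
      pc_poly (seg s i) <> pc_poly (seg s (i + 2)).
Proof.
  intros X s a r HX HP1 HP2 [Hside|Hs] Hnside _ [_ [Hlen [Hadj _]]] Hncyl i Hai Hir;
    [contradiction|].
  split; [apply (chain_poly_succ_neq X); auto; lia|].
  split; [replace (i + 2)%nat with (i + 1 + 1)%nat by lia; apply (chain_poly_succ_neq X); auto; lia|].
  intros Heq. apply Hncyl. split; [lia|].
  assert (Htype : forall k, (a <= k)%nat -> (k + 2 < a + r)%nat ->
            pc_poly (seg s k) = pc_poly (seg s (k + 2)) -> same_type X s k (k + 2)).
  { intros k Hk1 Hk2. apply (same_poly_same_type X); auto; try lia; apply Hadj; lia. }
  intros k Hk1 Hk2. apply Htype; auto.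
  apply (interval_spread (fun k => pc_poly (seg s k) = pc_poly (seg s (k + 2))) a (a + r - 3) i);
    try lia; auto.
  - intros m Hm E. replace (m + 1 + 2)%nat with (m + 3)%nat by lia.
    apply (same_type_succ_poly X); auto; [lia|]. apply Htype; auto; lia.
  - intros m Hm E. replace (m - 1 + 2)%nat with (m + 1)%nat by lia.
    apply (same_type_pred_poly X); auto; try lia. apply Htype; auto; lia.
Qed.
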